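(* Let $p>3$ be prime, $t\in\{1,3,p,3p\}$, and $1\le r\le 3p-1$ with $\gcd(r,3p)=1$. Then $\Lambda(p,r,t)=\{1\}$ if $r\equiv 2\pmod 3$ and $|r|_p$ is odd, and $\Lambda(p,r,t)=\emptyset$ otherwise.
   Context: $|r|_m$ is the multiplicative order of $r$ modulo $m$ (with $|r|_1=1$). $S_k(x):=1+x+\cdots+x^{k-1}$, $S_0:=0$. For $m\ge1$ with $\gcd(r,m)=1$, $\kappa(m,r,t):=\dfrac{m|r|_m}{\gcd(m,\,tS_{|r|_m}(r))}$. For $d\in\{1,3,p,3p\}$, $\Lambda(d,r,t):=\{\ell>0:\ \ell \text{ divides } \frac{|r|_{3p}}{\gcd(\kappa(d,r,t),|r|_{3p})}\text{ and }\gcd(r^{\ell\kappa(d,r,t)}-1,3p)=d\}$. *)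

From mathcomp Require Import all_boot.

(* |r|_m : multiplicative order of r modulo m, i.e. the least k >= 1 with
   r^k = 1 (mod m).  Computed by bounded search over 1..m; whenever
   gcd(r,m)=1 (the only case used) the order is <= totient m <= m, so the
   search finds it.  For m = 1 this gives 1, matching |r|_1 = 1. *)
Definition mord (m r : nat) : nat :=
  nth 0 [seq k <- iota 1 m | r ^ k %% m == 1 %% m] 0.

Definition Ssum (k x : nat) : nat := \sum_(i < k) x ^ i.

Definition kappa (m r t : nat) : nat :=
  (m * mord m r) %/ gcdn m (t * Ssum (mord m r) r).

Definition Lambda (p d r t : nat) (l : nat) : bool :=
  [&& 0 < l,
      l %| mord (3 * p) r %/ gcdn (kappa d r t) (mord (3 * p) r)
    & gcdn (r ^ (l * kappa d r t) - 1) (3 * p) == d].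

(* Put o = |r|_p.  Since p | r^n - 1 exactly when o | n, kappa(p,r,t) is o or
   p*o, and every exponent l*kappa makes r^(l*kappa) - 1 divisible by p; so the
   gcd with 3p is p exactly when 3 does not divide r^(l*kappa) - 1, i.e. when
   r = 2 (mod 3) and l*kappa is odd, which forces o and l odd.  In that case
   |r|_{3p} = 2o and gcd(kappa, 2o) = o, so l must divide 2, whence l = 1. *)

From mathcomp Require Import all_boot cyclic.
From mathcomp Require Import zify.

Lemma totient_leq n : totient n <= n.
Proof.
rewrite totient_count_coprime.
apply: (@leq_trans (\sum_(0 <= d < n) 1)); first by apply: leq_sum => d _; exact: leq_b1.
by rewrite sum_nat_const_nat muln1 subn0.
Qed.

Section MultiplicativeOrder.

Variables m r : nat.

Let unit_exp k := r ^ k %% m == 1 %% m.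

Lemma mord_min k : 0 < k <= m -> r ^ k = 1 %[mod m] -> mord m r <= k.
Proof.
move=> k_range rk1.
have : k \in [seq i <- iota 1 m | unit_exp i].
  by rewrite mem_filter /unit_exp rk1 eqxx mem_iota; lia.
have : sorted ltn [seq i <- iota 1 m | unit_exp i].
  by apply: sorted_filter; [exact: ltn_trans | exact: iota_ltn_sorted].
rewrite /mord -/unit_exp; case: [seq _ <- _ | _] => [//|j s] /= s_sorted.
rewrite in_cons => /predU1P [-> //|k_s].
exact/ltnW/(allP (order_path_min ltn_trans s_sorted)).
Qed.

Hypotheses (m_gt0 : 0 < m) (r_coprime : coprime r m).

Lemma mord_exp1 : 0 < mord m r <= m /\ r ^ mord m r = 1 %[mod m].
Proof.
have totient_exp : totient m \in [seq i <- iota 1 m | unit_exp i].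
  rewrite mem_filter /unit_exp (Euler_exp_totient r_coprime) eqxx mem_iota.
  by have := totient_leq m; have := totient_gt0 m; rewrite m_gt0; lia.
have : mord m r \in [seq i <- iota 1 m | unit_exp i].
  by rewrite /mord -/unit_exp; apply: mem_nth; case: [seq _ <- _ | _] totient_exp.
rewrite mem_filter mem_iota => /andP[/eqP rk1 k_range]; split=> //; lia.
Qed.

Lemma mord_dvd k : (r ^ k == 1 %[mod m]) = (mord m r %| k).
Proof.
have [/andP[o_gt0 o_le] ro1] := mord_exp1.
have exp_mul q : r ^ (mord m r * q) = 1 %[mod m].
  by rewrite expnM -modnXm ro1 modnXm exp1n.
apply/idP/idP => [rk1|/dvdnP[q ->]]; last by rewrite mulnC; apply/eqP.
rewrite /dvdn; apply/negPn/negP => rem_neq0.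
have rem_exp1 : r ^ (k %% mord m r) = 1 %[mod m].
  move/eqP: rk1; rewrite {1}(divn_eq k (mord m r)) expnD (mulnC (k %/ _)).
  by rewrite -modnMml exp_mul modnMml mul1n.
have rem_lt := ltn_pmod k o_gt0.
have : mord m r <= k %% mord m r.
  by apply: mord_min => //; rewrite lt0n rem_neq0 /=; lia.
by rewrite leqNgt rem_lt.
Qed.

Lemma mord_dvd_subn1 k : 0 < r -> (m %| r ^ k - 1) = (mord m r %| k).
Proof. by move=> r_gt0; rewrite -mord_dvd eqn_mod_dvd // expn_gt0 r_gt0. Qed.

End MultiplicativeOrder.

Lemma mordM_dvd m n r k : 0 < m -> 0 < n -> coprime m n -> coprime r (m * n) ->
  (mord (m * n) r %| k) = (mord m r %| k) && (mord n r %| k).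
Proof.
move=> m_gt0 n_gt0 mn_cop; rewrite coprimeMr => /andP[rm_cop rn_cop].
by rewrite -!mord_dvd ?muln_gt0 ?m_gt0 ?coprimeMr ?rm_cop // chinese_remainder.
Qed.

Lemma mod3_coprime r : coprime r 3 -> r %% 3 = 1 \/ r %% 3 = 2.
Proof.
rewrite -coprime_modl; have : r %% 3 < 3 by rewrite ltn_mod.
by case: (r %% 3) => [|[|[|]]] //; auto.
Qed.

Lemma expn2_mod3 k : 2 ^ k %% 3 = if odd k then 2 else 1.
Proof. by elim: k => [//|k IHk]; rewrite expnS -modnMmr IHk /=; case: (odd k). Qed.

Lemma mord3_dvd r k : coprime r 3 -> (mord 3 r %| k) = (r %% 3 == 1) || ~~ odd k.
Proof.
move=> r_cop; rewrite -mord_dvd // -modnXm.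
by case: (mod3_coprime r r_cop) => ->; rewrite ?exp1n ?expn2_mod3 //; case: (odd k).
Qed.

Lemma kappa_prime p r t : prime p ->
  kappa p r t = mord p r \/ kappa p r t = p * mord p r.
Proof.
move=> p_prime; rewrite /kappa.
case/pred2P: ((primeP p_prime).2 _ (dvdn_gcdl p (t * Ssum (mord p r) r))) => ->.
  by right; rewrite divn1.
by left; rewrite mulKn // prime_gt0.
Qed.

Lemma gcdn_mul_prime_eq q p x : prime q -> coprime q p -> p %| x ->
  (gcdn x (q * p) == p) = ~~ (q %| x).
Proof.
move=> q_prime qp_cop /dvdnP[y ->].
have p_gt0 : 0 < p.
  by case: p qp_cop => //; rewrite /coprime gcdn0 => /eqP q1; rewrite q1 in q_prime.
rewrite mulnC (mulnC q) -muln_gcdr -[X in _ == X]muln1 eqn_pmul2l //.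
by rewrite Gauss_dvdr // -/(coprime y q) coprime_sym prime_coprime.
Qed.

Lemma mord_mul3_odd p r : prime p -> coprime 3 p -> coprime r (3 * p) ->
  r %% 3 = 2 -> odd (mord p r) -> mord (3 * p) r = 2 * mord p r.
Proof.
move=> p_prime p_cop3 r_cop r_mod3 o_odd.
have r_cop3 : coprime r 3 by move: r_cop; rewrite coprimeMr => /andP[].
have mord3p_dvd k : (mord (3 * p) r %| k) = ~~ odd k && (mord p r %| k).
  by rewrite mordM_dvd ?prime_gt0 // mord3_dvd // r_mod3.
apply/eqP; rewrite eqn_dvd mord3p_dvd oddM /= dvdn_mull //=.
have /andP[M_even o_dvd] : ~~ odd (mord (3 * p) r) && (mord p r %| mord (3 * p) r).
  by rewrite -mord3p_dvd.
by rewrite Gauss_dvd ?coprime2n // dvdn2 M_even.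
Qed.

Lemma odd_dvdn2 l : [&& 0 < l, l %| 2 & odd l] = (l == 1).
Proof.
apply/idP/eqP => [/and3P[l_gt0 /dvdn_leq l_le2 l_odd]|-> //].
by move: {l_le2}(l_le2 isT) l_gt0 l_odd; case: l => [|[|[|]]].
Qed.

Theorem lemma5p4 (p t r : nat) :
  prime p -> 3 < p ->
  t \in [:: 1; 3; p; 3 * p] ->
  1 <= r <= 3 * p - 1 -> coprime r (3 * p) ->
  forall l : nat,
    Lambda p p r t l = [&& r %% 3 == 2, odd (mord p r) & l == 1].
Proof.
move=> p_prime p_gt3 _ /andP[r_gt0 _] r_cop l.
have [r_cop3 r_copp] : coprime r 3 /\ coprime r p by apply/andP; rewrite -coprimeMr.
have p_gt0 : 0 < p := prime_gt0 p_prime.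
have p_cop3 : coprime 3 p by rewrite prime_coprime // dvdn_prime2 //; lia.
have p_odd : odd p by case: (even_prime p_prime) => // p2; lia.
set o := mord p r; set kap := kappa p r t.
have kap_cases : kap = o \/ kap = p * o := kappa_prime p r t p_prime.
have p_dvd : p %| r ^ (l * kap) - 1.
  rewrite mord_dvd_subn1 // dvdn_mull //.
  by case: kap_cases => ->; rewrite ?dvdn_mull.
rewrite /Lambda -/kap gcdn_mul_prime_eq // mord_dvd_subn1 // mord3_dvd // negb_or negbK.
case: (mod3_coprime r r_cop3) => r_mod3; rewrite r_mod3; first by rewrite !andbF.
have odd_kap : odd kap = odd o by case: kap_cases => ->; rewrite ?oddM ?p_odd.
rewrite oddM odd_kap /=; case: (boolP (odd o)) => o_odd; last by rewrite !andbF.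
have gcd_kap : gcdn kap (2 * o) = o.
  case: kap_cases => ->; first by rewrite gcdnMl.
  by rewrite -muln_gcdl (eqP (_ : coprime p 2)) ?mul1n // coprimen2.
by rewrite mord_mul3_odd // -/o gcd_kap (mulnK 2 (odd_gt0 o_odd)) andbT odd_dvdn2.
Qed.
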